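(* Let $\mathcal F\subset 2^{\mathbb N}$ be a Furstenberg family, let $X_1,X_2$ be Polish topological vector spaces, and let $T_1\in\mathfrak L(X_1)$, $T_2\in\mathfrak L(X_2)$. If $T_1$ is $\mathcal F$-hypercyclic and $T_2$ is hereditarily $\mathcal F$-hypercyclic, then $T_1\oplus T_2$ is $\mathcal F$-hypercyclic on $X_1\times X_2$. If both $T_1$ and $T_2$ are hereditarily $\mathcal F$-hypercyclic, then $T_1\oplus T_2$ is hereditarily $\mathcal F$-hypercyclic.
   Context: A Furstenberg family is a family of non-empty subsets of $\mathbb N$ which is hereditary upwards ($A\in\mathcal F$, $A\subset A'$ implies $A'\in\mathcal F$). $\mathcal N_T(x,V):=\{n\in\mathbb N:T^nx\in V\}$. $T$ is $\mathcal F$-hypercyclic if there is $x$ with $\mathcal N_T(x,V)\in\mathcal F$ for every non-empty open $V$. $T$ is hereditarily $\mathcal F$-hypercyclic if for every countable family $(V_i)_{i\in I}$ of non-empty open sets and every family $(A_i)_{i\in I}\subset\mathcal F$, there is $x$ with $\mathcal N_T(x,V_i)\cap A_i\in\mathcal F$ for all $i\in I$. *)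

From HB Require Import structures.
From mathcomp Require Import all_boot all_order all_algebra.
From mathcomp Require Import all_classical all_reals all_analysis.
From mathcomp Require Import Rstruct Rstruct_topology.
From Stdlib Require Import Reals.

Set Implicit Arguments.
Unset Strict Implicit.
Unset Printing Implicit Defensive.

Import Order.TTheory GRing.Theory Num.Theory.
Local Open Scope classical_set_scope.

Definition furstenberg_family (F : set (set nat)) : Prop :=
  (forall A, F A -> A !=set0) /\
  (forall A A' : set nat, F A -> A `<=` A' -> F A').

Definition separable_space (T : topologicalType) : Prop :=
  exists D : set T, countable D /\ dense D.

Definition completely_metrizable (T : topologicalType) : Prop :=
  exists d : T -> T -> R,
    (forall x y, (0 <= d x y)%R) /\
    (forall x y, d x y = 0%R <-> x = y) /\
    (forall x y, d x y = d y x) /\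
    (forall x y z, (d x z <= d x y + d y z)%R) /\
    (forall A : set T, open A <->
       (forall x, A x -> exists e : R, (0 < e)%R /\ [set y | (d x y < e)%R] `<=` A)) /\
    (forall u : nat -> T,
       (forall e : R, (0 < e)%R -> exists N, forall m n,
            (N <= m)%N -> (N <= n)%N -> (d (u m) (u n) < e)%R) ->
       exists l, forall e : R, (0 < e)%R -> exists N, forall n,
            (N <= n)%N -> (d (u n) l < e)%R).

Definition polish_space (T : topologicalType) : Prop :=
  separable_space T /\ completely_metrizable T.

Definition return_set {X : Type} (T : X -> X) (x : X) (V : set X) : set nat :=
  [set n | V (iter n T x)].

Definition F_hypercyclic (F : set (set nat)) {X : topologicalType} (T : X -> X) : Prop :=
  exists x : X, forall V : set X, open V -> V !=set0 -> F (return_set T x V).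

Definition hereditarily_F_hypercyclic (F : set (set nat)) {X : topologicalType}
    (T : X -> X) : Prop :=
  forall (I : Type) (V : I -> set X) (A : I -> set nat),
    countable [set: I] ->
    (forall i, open (V i) /\ V i !=set0) ->
    (forall i, F (A i)) ->
    exists x : X, forall i, F (return_set T x (V i) `&` A i).

Definition op_dsum {X1 X2 : Type} (T1 : X1 -> X1) (T2 : X2 -> X2) : X1 * X2 -> X1 * X2 :=
  fun p => (T1 p.1, T2 p.2).

(** The product operator is handled one coordinate at a time: its return set
    to a rectangle [U `*` V] is [N_T1(x1, U) `&` N_T2(x2, V)], and every
    non-empty open set of [X1 * X2] contains a rectangle of non-empty open
    sets. For the first claim, fix an [F]-hypercyclic [x1] for [T1] and feed
    the countably many sets [N_T1(x1, U_m)], [U_m] ranging over a countable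
    pi-base of [X1], together with a countable pi-base of [X2], to the
    hereditary [F]-hypercyclicity of [T2]. For the second, choose a rectangle
    inside each [V_i] and apply the hereditary property of [T1] and then of
    [T2], the latter with the sets [N_T1(x1, U_i) `&` A_i]. *)
From HB Require Import structures.
From mathcomp Require Import all_boot all_order all_algebra.
From mathcomp Require Import all_classical all_reals all_analysis.
From mathcomp Require Import Rstruct Rstruct_topology.
From Stdlib Require Import Reals Lra.
Local Open Scope classical_set_scope.

Definition countable_pi_base (X : topologicalType) : Prop :=
  exists (I : Type) (B : I -> set X), countable [set: I] /\
    (forall i, open (B i) /\ B i !=set0) /\
    (forall W, open W -> W !=set0 -> exists i, B i `<=` W).

Section metric_pi_base.
Variables (X : topologicalType) (d : X -> X -> R).
Hypothesis d_refl : forall x, d x x = 0%R.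
Hypothesis d_triangle : forall x y z, (d x z <= d x y + d y z)%R.
Hypothesis d_open : forall A : set X, open A <->
  (forall x, A x -> exists e : R, (0 < e)%R /\ [set y | (d x y < e)%R] `<=` A).

Let dball (x : X) (r : R) := [set y | (d x y < r)%R].

Let dball_open x r : open (dball x r).
Proof.
apply/d_open => y; rewrite /dball /= => dxy; exists (r - d x y)%R.
by split=> [|z /= dyz]; [|have := d_triangle x y z]; lra.
Qed.

Let dball_neq0 x r : (0 < r)%R -> dball x r !=set0.
Proof. by move=> r_gt0; exists x; rewrite /dball /= d_refl. Qed.

Let radius (m : nat) : R := / (INR m + 1).

Let radius_gt0 m : (0 < radius m)%R.
Proof. by apply: Rinv_0_lt_compat; have := pos_INR m; lra. Qed.

Let twice_radius_lt e : (0 < e)%R -> exists m, (2 * radius m < e)%R.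
Proof.
move=> e_gt0; have [m [me m_gt0]] := archimed_cor1 (e / 2) ltac:(lra).
exists m; suff : (radius m < / INR m)%R by lra.
have INRm_gt0 := lt_0_INR m m_gt0.
by apply: Rinv_lt_contravar; nra.
Qed.

Lemma separable_metric_countable_pi_base {D : set X} :
  countable D -> dense D -> countable_pi_base X.
Proof.
move=> D_countable D_dense.
exists ({x | D x} * nat)%type,
  (fun qm : {x | D x} * nat => dball (sval qm.1) (radius qm.2)).
split; [|split].
- rewrite -setXTT; apply: countableX => //.
  have /countable_injP[f f_inj] := D_countable.
  apply/countable_injP; exists (f \o sval) => -[p Dp] [q Dq] _ _ /= fpq.
  have pq := f_inj p q (mem_set Dp) (mem_set Dq) fpq.
  by subst q; congr exist; exact: Prop_irrelevance.
- by move=> qm; split; [exact: dball_open|exact: dball_neq0].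
- move=> W W_open [x Wx].
  have [e [e_gt0 xeW]] := proj1 (d_open W) W_open x Wx.
  have [m me] := twice_radius_lt e e_gt0.
  have [q [dxq Dq]] := D_dense _ (dball_neq0 x (radius m) (radius_gt0 m))
    (dball_open x (radius m)).
  exists (exist _ q Dq, m) => z; move: dxq; rewrite /dball /= => dxq dqz.
  by apply: xeW => /=; have := d_triangle x q z; lra.
Qed.

End metric_pi_base.

Lemma polish_countable_pi_base (X : topologicalType) :
  polish_space X -> countable_pi_base X.
Proof.
move=> [[D [D_countable D_dense]] [d [_ [d_eq0 [_ [d_triangle [d_open _]]]]]]].
have d_refl x : d x x = 0%R by exact/d_eq0.
exact: (separable_metric_countable_pi_base _ _ d_refl d_triangle d_open D_countable D_dense).
Qed.

Lemma open_neq0_sub_setX {X1 X2 : topologicalType} {W : set (X1 * X2)} :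
  open W -> W !=set0 -> exists U V,
    (open U /\ U !=set0) /\ (open V /\ V !=set0) /\ U `*` V `<=` W.
Proof.
move=> W_open [[a b] Wab].
have : nbhs (a, b) W by apply: open_nbhs_nbhs.
move=> [[P Q] /= [+ +] PQW]; rewrite !nbhsE => -[U [U_open Ua] UP] [V [V_open Vb] VQ].
exists U, V; split; first by split; last exists a.
split; first by split; last exists b.
by move=> [x y] [/= Ux Vy]; apply: PQW; split; [exact: UP|exact: VQ].
Qed.

Lemma iter_op_dsum {X1 X2 : Type} (T1 : X1 -> X1) (T2 : X2 -> X2) n p :
  iter n (op_dsum T1 T2) p = (iter n T1 p.1, iter n T2 p.2).
Proof. by elim: n => [|n IH] /=; [case: p|rewrite IH]. Qed.

Lemma return_set_op_dsumX {X1 X2 : Type} (T1 : X1 -> X1) (T2 : X2 -> X2)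
    x1 x2 (U : set X1) (V : set X2) :
  return_set (op_dsum T1 T2) (x1, x2) (U `*` V) =
  return_set T1 x1 U `&` return_set T2 x2 V.
Proof. by apply/seteqP; split=> n; rewrite /return_set /= iter_op_dsum. Qed.

Lemma return_set_op_dsum_sub {X1 X2 : Type} (T1 : X1 -> X1) (T2 : X2 -> X2)
    x1 x2 {U : set X1} {V : set X2} {W : set (X1 * X2)} :
  U `*` V `<=` W ->
  return_set T1 x1 U `&` return_set T2 x2 V `<=` return_set (op_dsum T1 T2) (x1, x2) W.
Proof. by move=> UVW n; rewrite -return_set_op_dsumX => /UVW. Qed.

Section direct_sum.
Variables (F : set (set nat)) (X1 X2 : topologicalType).
Variables (T1 : X1 -> X1) (T2 : X2 -> X2).
Hypothesis F_up : forall A A' : set nat, F A -> A `<=` A' -> F A'.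

Lemma F_hypercyclic_op_dsum :
  countable_pi_base X1 -> countable_pi_base X2 ->
  F_hypercyclic F T1 -> hereditarily_F_hypercyclic F T2 ->
  F_hypercyclic F (op_dsum T1 T2).
Proof.
move=> [I1 [B1 [I1_countable [B1_open B1_sub]]]].
move=> [I2 [B2 [I2_countable [B2_open B2_sub]]]] [x1 x1_hc] T2_hhc.
have [x2 x2_hc] := T2_hhc (I1 * I2)%type (fun i => B2 i.2)
  (fun i => return_set T1 x1 (B1 i.1))
  ltac:(by rewrite -setXTT; exact: countableX)
  (fun i => B2_open i.2) (fun i => x1_hc _ (B1_open i.1).1 (B1_open i.1).2).
exists (x1, x2) => W W_open W_neq0.
have [U [V [[U_open U_neq0] [[V_open V_neq0] UVW]]]] :=
  open_neq0_sub_setX W_open W_neq0.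
have [i1 B1U] := B1_sub U U_open U_neq0.
have [i2 B2V] := B2_sub V V_open V_neq0.
have B1B2W : B1 i1 `*` B2 i2 `<=` W by move=> p [/B1U ? /B2V ?]; apply: UVW.
apply: F_up (x2_hc (i1, i2)) _ => n [B2n B1n].
by apply: (return_set_op_dsum_sub _ _ _ _ B1B2W).
Qed.

Lemma hereditarily_F_hypercyclic_op_dsum :
  hereditarily_F_hypercyclic F T1 -> hereditarily_F_hypercyclic F T2 ->
  hereditarily_F_hypercyclic F (op_dsum T1 T2).
Proof.
move=> T1_hhc T2_hhc I W A I_countable W_open A_F.
have /choice[UV UV_spec] : forall i, exists UV : set X1 * set X2,
    (open UV.1 /\ UV.1 !=set0) /\ (open UV.2 /\ UV.2 !=set0) /\
    UV.1 `*` UV.2 `<=` W i.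
  move=> i; have [U [V UV_spec]] := open_neq0_sub_setX (W_open i).1 (W_open i).2.
  by exists (U, V).
have [x1 x1_hhc] := T1_hhc I (fun i => (UV i).1) A I_countable
  (fun i => (UV_spec i).1) A_F.
have [x2 x2_hhc] := T2_hhc I (fun i => (UV i).2)
  (fun i => return_set T1 x1 (UV i).1 `&` A i) I_countable
  (fun i => (UV_spec i).2.1) x1_hhc.
exists (x1, x2) => i; apply: F_up (x2_hhc i) _ => n [V_n [U_n A_n]]; split=> //.
by apply: (return_set_op_dsum_sub _ _ _ _ (UV_spec i).2.2).
Qed.

End direct_sum.

Theorem proposition4p1 (K : numFieldType) (F : set (set nat))
  (X1 X2 : topologicalLmodType K)
  (T1 : {linear X1 -> X1}) (T2 : {linear X2 -> X2}) :
  furstenberg_family F ->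
  polish_space X1 -> polish_space X2 ->
  continuous T1 -> continuous T2 ->
  (F_hypercyclic F T1 -> hereditarily_F_hypercyclic F T2 ->
     F_hypercyclic F (op_dsum T1 T2)) /\
  (hereditarily_F_hypercyclic F T1 -> hereditarily_F_hypercyclic F T2 ->
     hereditarily_F_hypercyclic F (op_dsum T1 T2)).
Proof.
move=> [_ F_up] X1_polish X2_polish _ _; split.
- apply: F_hypercyclic_op_dsum => //; exact: polish_countable_pi_base.
- exact: hereditarily_F_hypercyclic_op_dsum.
Qed.
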